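(* Let $\mathfrak C$ be a monster model of a complete theory $T$. (i) Let $\pi(\bar x,\bar y)$ be a partial type without parameters and $\bar a,\bar b$ short tuples from $\mathfrak C$ corresponding to $\bar x,\bar y$. Then $A_{\pi,\bar a,\bar b}^{-1}=A_{\pi',\bar b,\bar a}$, where $\pi'(\bar y,\bar x):=\pi(\bar x,\bar y)$. (ii) Let $n\ge 2$ and let $\bar x,\bar y,\bar x_1,\dots,\bar x_n$ be pairwise disjoint short tuples of variables of the same length (and sorts). Then there is a partial type $\Phi_n(\bar x,\bar y,\bar x_1,\dots,\bar x_n)$ without parameters such that for all partial types $\pi_1(\bar x_1,\bar y),\dots,\pi_n(\bar x_n,\bar y)$ without parameters and every tuple $\bar a$ from $\mathfrak C$ corresponding to $\bar x$, we have $A_{\pi_1,\bar a}\cdots A_{\pi_n,\bar a}=A_{\pi,\bar a}$, where $\pi(\bar x,\bar y):=(\exists\bar x_1,\dots,\bar x_n)\big(\pi_1(\bar x_1,\bar y)\wedge\dots\wedge\pi_n(\bar x_n,\bar y)\wedge\Phi_n(\bar x,\bar y,\bar x_1,\dots,\bar x_n)\big)$.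
   Context: $\mathfrak C$ is $\kappa$-saturated and strongly $\kappa$-homogeneous ($\kappa$ large); short means of length $<\kappa$. For a partial type $\pi(\bar x,\bar y)$ without parameters and tuples $\bar a,\bar b$ from $\mathfrak C$ corresponding to $\bar x,\bar y$, $A_{\pi,\bar a,\bar b}=\{\sigma\in\mathrm{Aut}(\mathfrak C):\mathfrak C\models\pi(\sigma(\bar a),\bar b)\}$; when $\bar x,\bar y$ have the same length and sorts, $A_{\pi,\bar a}:=A_{\pi,\bar a,\bar a}$. Products and inverses of subsets of $\mathrm{Aut}(\mathfrak C)$ are taken in the group. *)

From Stdlib Require Import List.

Set Implicit Arguments.
Unset Strict Implicit.

Record signature := {
  sort : Type;
  fsym : Type;
  rsym : Type;
  farity : fsym -> list sort;
  fsort : fsym -> sort;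
  rarity : rsym -> list sort
}.

Fixpoint htuple (S : Type) (D : S -> Type) (l : list S) : Type :=
  match l with
  | nil => unit
  | s :: l' => (D s * htuple D l')%type
  end.

Fixpoint hmap (S : Type) (D : S -> Type) (g : forall s, D s -> D s)
  (l : list S) : htuple D l -> htuple D l :=
  match l return htuple D l -> htuple D l with
  | nil => fun u => u
  | s :: l' => fun p => (g s (fst p), @hmap S D g l' (snd p))
  end.

Record structure (L : signature) := {
  dom : sort L -> Type;
  funs : forall f : fsym L, htuple dom (farity f) -> dom (fsort f);
  rels : forall r : rsym L, htuple dom (rarity r) -> Prop
}.

Section Syntax.
Variable L : signature.

Definition ext (V : Type) (vs : V -> sort L) (s : sort L) (o : option V) : sort L :=
  match o with Some v => vs v | None => s end.

Inductive term (V : Type) (vs : V -> sort L) : sort L -> Type :=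
| tvar : forall x : V, term vs (vs x)
| tapp : forall f : fsym L, terms vs (farity f) -> term vs (fsort f)
with terms (V : Type) (vs : V -> sort L) : list (sort L) -> Type :=
| tnil : terms vs nil
| tcons : forall s l, term vs s -> terms vs l -> terms vs (s :: l).

Inductive formula (V : Type) (vs : V -> sort L) : Type :=
| feq : forall s, term vs s -> term vs s -> formula vs
| frel : forall r : rsym L, terms vs (rarity r) -> formula vs
| fneg : formula vs -> formula vs
| fand : formula vs -> formula vs -> formula vs
| fex : forall s : sort L, @formula (option V) (ext vs s) -> formula vs.

Definition ptype (V : Type) (vs : V -> sort L) := formula vs -> Prop.

Fixpoint rename_term (V W : Type) (vs : V -> sort L) (ws : W -> sort L)
  (f : V -> W) (H : forall v, ws (f v) = vs v) (s : sort L) (t : term vs s)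
  {struct t} : term ws s :=
  match t in term _ s0 return term ws s0 with
  | @tvar _ _ x => eq_rect _ (term ws) (@tvar W ws (f x)) _ (H x)
  | @tapp _ _ g ts => @tapp W ws g (rename_terms H ts)
  end
with rename_terms (V W : Type) (vs : V -> sort L) (ws : W -> sort L)
  (f : V -> W) (H : forall v, ws (f v) = vs v) (l : list (sort L))
  (ts : terms vs l) {struct ts} : terms ws l :=
  match ts in terms _ l0 return terms ws l0 with
  | @tnil _ _ => @tnil W ws
  | @tcons _ _ _ _ t ts' => tcons (rename_term H t) (rename_terms H ts')
  end.

Definition lift_ren (V W : Type) (vs : V -> sort L) (ws : W -> sort L)
  (f : V -> W) (H : forall v, ws (f v) = vs v) (s : sort L) :
  forall o : option V, ext ws s (option_map f o) = ext vs s o :=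
  fun o => match o return ext ws s (option_map f o) = ext vs s o with
           | Some v => H v
           | None => eq_refl
           end.

Fixpoint rename (V W : Type) (vs : V -> sort L) (ws : W -> sort L)
  (f : V -> W) (H : forall v, ws (f v) = vs v) (phi : formula vs)
  {struct phi} : formula ws :=
  match phi with
  | @feq _ _ _ t1 t2 => feq (rename_term H t1) (rename_term H t2)
  | @frel _ _ r ts => @frel W ws r (rename_terms H ts)
  | @fneg _ _ psi => fneg (rename H psi)
  | @fand _ _ psi chi => fand (rename H psi) (rename H chi)
  | @fex _ _ s psi => @fex W ws s (rename (lift_ren H s) psi)
  end.

(** variable sets for tuples of variables x̄ (left) and ȳ (right) *)
Definition sum_sort (I J : Type) (sI : I -> sort L) (sJ : J -> sort L)
  (v : I + J) : sort L :=
  match v with inl i => sI i | inr j => sJ j end.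

Definition swapv (I J : Type) (v : I + J) : J + I :=
  match v with inl i => inr i | inr j => inl j end.

Lemma swap_sort (I J : Type) (sI : I -> sort L) (sJ : J -> sort L) :
  forall v : I + J, sum_sort sJ sI (swapv v) = sum_sort sI sJ v.
Proof. intros v; destruct v; reflexivity. Qed.

Definition swap_ptype (I J : Type) (sI : I -> sort L) (sJ : J -> sort L)
  (pi : ptype (sum_sort sI sJ)) : ptype (sum_sort sJ sI) :=
  fun psi => exists phi, pi phi /\ psi = rename (swap_sort sI sJ) phi.

End Syntax.

Arguments tvar {L V} vs x.
Arguments tapp {L V} vs f _.
Arguments tnil {L V} vs.

Section Semantics.
Variable L : signature.
Variable M : structure L.

Fixpoint eval_term (V : Type) (vs : V -> sort L) (e : forall v, dom M (vs v))
  (s : sort L) (t : term vs s) {struct t} : dom M s :=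
  match t in term _ s0 return dom M s0 with
  | @tvar _ _ _ x => e x
  | @tapp _ _ _ f ts => @funs L M f (eval_terms e ts)
  end
with eval_terms (V : Type) (vs : V -> sort L) (e : forall v, dom M (vs v))
  (l : list (sort L)) (ts : terms vs l) {struct ts} : htuple (dom M) l :=
  match ts in terms _ l0 return htuple (dom M) l0 with
  | @tnil _ _ _ => tt
  | @tcons _ _ _ _ _ t ts' => (eval_term e t, eval_terms e ts')
  end.

Definition ext_env (V : Type) (vs : V -> sort L) (s : sort L)
  (e : forall v, dom M (vs v)) (d : dom M s) :
  forall o : option V, dom M (ext vs s o) :=
  fun o => match o return dom M (ext vs s o) with
           | Some v => e v
           | None => d
           end.

Fixpoint sat (V : Type) (vs : V -> sort L) (phi : formula vs) {struct phi} :
  (forall v, dom M (vs v)) -> Prop :=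
  match phi with
  | @feq _ _ _ _ t1 t2 => fun e => eval_term e t1 = eval_term e t2
  | @frel _ _ _ r ts => fun e => @rels L M r (eval_terms e ts)
  | @fneg _ _ _ psi => fun e => ~ sat psi e
  | @fand _ _ _ psi chi => fun e => sat psi e /\ sat chi e
  | @fex _ _ _ s psi => fun e => exists d : dom M s, sat psi (ext_env e d)
  end.

Definition sat_type (V : Type) (vs : V -> sort L) (pi : ptype vs)
  (e : forall v, dom M (vs v)) : Prop :=
  forall phi, pi phi -> sat phi e.

Definition tup (I : Type) (srt : I -> sort L) := forall i, dom M (srt i).

Definition pair_env (I J : Type) (sI : I -> sort L) (sJ : J -> sort L)
  (a : tup sI) (b : tup sJ) : forall v, dom M (sum_sort sI sJ v) :=
  fun v => match v return dom M (sum_sort sI sJ v) with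
           | inl i => a i
           | inr j => b j
           end.

Definition autfun := forall s : sort L, dom M s -> dom M s.

Definition is_aut (sigma : autfun) : Prop :=
  (forall s, exists g : dom M s -> dom M s,
       (forall x, g (sigma s x) = x) /\ (forall x, sigma s (g x) = x)) /\
  (forall f args, sigma (fsort f) (@funs L M f args) = @funs L M f (hmap sigma args)) /\
  (forall r args, @rels L M r (hmap sigma args) <-> @rels L M r args).

Definition aut_set := autfun -> Prop.

Definition set_eq (A B : aut_set) : Prop := forall sigma, A sigma <-> B sigma.

Definition inv_set (A : aut_set) : aut_set :=
  fun sigma => exists tau, A tau /\
    forall s x, sigma s (tau s x) = x /\ tau s (sigma s x) = x.

(* τ_0 ∘ τ_1 ∘ ... ∘ τ_{n-1} *)
Fixpoint comp_n (n : nat) (tau : nat -> autfun) : autfun :=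
  match n with
  | O => fun s x => x
  | S m => fun s x => @comp_n m tau s (tau m s x)
  end.

Definition prod_n (n : nat) (A : nat -> aut_set) : aut_set :=
  fun sigma => exists tau : nat -> autfun,
    (forall k, k < n -> A k (tau k)) /\
    forall s x, sigma s x = @comp_n n tau s x.

Definition apply_tup (sigma : autfun) (I : Type) (srt : I -> sort L)
  (a : tup srt) : tup srt := fun i => sigma (srt i) (a i).

Definition A_rel (I J : Type) (sI : I -> sort L) (sJ : J -> sort L)
  (R : tup sI -> tup sJ -> Prop) (a : tup sI) (b : tup sJ) : aut_set :=
  fun sigma => is_aut sigma /\ R (apply_tup sigma a) b.

Definition A_pi (I J : Type) (sI : I -> sort L) (sJ : J -> sort L)
  (pi : ptype (sum_sort sI sJ)) (a : tup sI) (b : tup sJ) : aut_set :=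
  A_rel (fun c d => sat_type pi (pair_env c d)) a b.

End Semantics.

Definition injective (A B : Type) (f : A -> B) := forall x y, f x = f y -> x = y.

Definition lt_card (A K : Type) : Prop :=
  (exists f : A -> K, injective f) /\ ~ (exists g : K -> A, injective g).

Definition saturated (L : signature) (K : Type) (M : structure L) : Prop :=
  forall (P : Type) (ps : P -> sort L) (p : forall j, dom M (ps j)),
  lt_card P K ->
  forall (s : sort L) (Sigma : formula (ext ps s) -> Prop),
  (forall l : list (formula (ext ps s)),
      (forall phi, In phi l -> Sigma phi) ->
      exists d : dom M s, forall phi, In phi l -> sat phi (ext_env p d)) ->
  exists d : dom M s, forall phi, Sigma phi -> sat phi (ext_env p d).

Definition strongly_homogeneous (L : signature) (K : Type) (M : structure L) : Prop :=
  forall (I : Type) (srt : I -> sort L) (a b : tup M srt),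
  lt_card I K ->
  (forall phi : formula srt, sat phi a <-> sat phi b) ->
  exists sigma : autfun M, is_aut sigma /\ forall i, sigma (srt i) (a i) = b i.

Definition monster (L : signature) (K : Type) (M : structure L) : Prop :=
  lt_card (nat + (sort L + (fsym L + rsym L))) K /\
  saturated K M /\ strongly_homogeneous K M.

(** * Variables for Φ_n(x̄, ȳ, x̄_1, ..., x̄_n) *)
Definition phi_var (I : Type) (n : nat) := ((I + I) + ({k : nat | k < n} * I))%type.

Definition phi_sort (L : signature) (I : Type) (srt : I -> sort L) (n : nat)
  (v : phi_var I n) : sort L :=
  match v with inl w => sum_sort srt srt w | inr p => srt (snd p) end.

Definition phi_env (L : signature) (M : structure L) (I : Type)
  (srt : I -> sort L) (n : nat) (c d : tup M srt)
  (e : {k : nat | k < n} -> tup M srt) : forall v, dom M (phi_sort srt v) :=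
  fun v => match v return dom M (phi_sort srt v) with
           | inl w => pair_env c d w
           | inr p => e (fst p) (snd p)
           end.

(* Part (i) is the automorphism invariance of satisfaction: [pi(sigma a, b)] holds iff
   [pi(a, sigma^-1 b)] does.

   For part (ii), [Phi_n(x, y, x_1, ..., x_n)] expresses that there is a chain
   [y = c_0, c_1, ..., c_n = x] with [tp(c_(k+1), c_k) = tp(x_k, y)] for all [k]; as the inner
   links are not among the variables, [Phi_n] consists of the existential closures of the finite
   parts of this type.  If [sigma = tau_1 ... tau_n] with [tau_k] in [A_(pi_k, a)], the partial
   products applied to [a] form such a chain with [x_k := tau_k a].  Conversely, saturation
   realizes the chain, strong homogeneity yields automorphisms [P_k] with [P_k a = c_k],
   [P_0 = id] and [P_n = sigma], and [sigma] telescopes into the product of the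
   [tau_k := P_k^-1 P_(k+1)]; each lies in [A_(pi_k, a)] because [(tau_k a, a)] is the image of
   [(c_(k+1), c_k)] under [P_k^-1], which has the type of [(x_k, y)].

   Realizing a type in [n |I|] variables takes one-variable saturation together with Zorn's
   lemma, and keeping fewer than [kappa] parameters uses [|X + X| = |X|] for infinite [X]. *)

From Stdlib Require Import List Classical ClassicalEpsilon FunctionalExtensionality
  PropExtensionality ProofIrrelevance Eqdep Lia PeanoNat Compare_dec.
From mathcomp Require classical_sets.

Set Implicit Arguments.
Unset Strict Implicit.

(** * Satisfaction and automorphisms *)

Definition agree_on (V : Type) (D : V -> Type) (F : list V) (e e' : forall v, D v) : Prop :=
  forall v, In v F -> e v = e' v.

Lemma agree_on_app (V : Type) (D : V -> Type) (F1 F2 : list V) (e e' : forall v, D v) :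
  agree_on (F1 ++ F2) e e' -> agree_on F1 e e' /\ agree_on F2 e e'.
Proof. intros H; split; intros v Hv; apply H, in_or_app; auto. Qed.

Scheme term_mut := Induction for term Sort Prop
  with terms_mut := Induction for terms Sort Prop.
Combined Scheme term_terms_mut from term_mut, terms_mut.

Section Satisfaction.
Variable L : signature.
Variable M : structure L.

Definition pull_env (V W : Type) (vs : V -> sort L) (ws : W -> sort L) (f : V -> W)
  (H : forall v, ws (f v) = vs v) (e : forall w, dom M (ws w)) : forall v, dom M (vs v) :=
  fun v => eq_rect _ (dom M) (e (f v)) _ (H v).

Lemma eval_term_cast (W : Type) (ws : W -> sort L) (e : forall w, dom M (ws w))
  s1 s2 (p : s1 = s2) (t : term ws s1) :
  eval_term e (eq_rect s1 (term ws) t s2 p) = eq_rect s1 (dom M) (eval_term e t) s2 p.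
Proof. destruct p. reflexivity. Qed.

Lemma eval_rename (V W : Type) (vs : V -> sort L) (ws : W -> sort L) (f : V -> W)
  (H : forall v, ws (f v) = vs v) (e : forall w, dom M (ws w)) :
  (forall s (t : term vs s), eval_term e (rename_term H t) = eval_term (pull_env H e) t) /\
  (forall l (ts : terms vs l), eval_terms e (rename_terms H ts) = eval_terms (pull_env H e) ts).
Proof.
  apply term_terms_mut; simpl.
  - intros x. apply eval_term_cast.
  - intros g ts IH. rewrite IH. reflexivity.
  - reflexivity.
  - intros s l t IHt ts IHts. rewrite IHt, IHts. reflexivity.
Qed.

Lemma sat_rename (V : Type) (vs : V -> sort L) (phi : formula vs) :
  forall (W : Type) (ws : W -> sort L) (f : V -> W) (H : forall v, ws (f v) = vs v)
    (e : forall w, dom M (ws w)),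
  sat (rename H phi) e <-> sat phi (pull_env H e).
Proof.
  induction phi as [V vs s t1 t2|V vs r ts|V vs psi IH|V vs psi IH chi IH2|V vs s psi IH];
    intros W ws f H e; simpl.
  - rewrite !(proj1 (eval_rename H e)). tauto.
  - rewrite (proj2 (eval_rename H e)). tauto.
  - rewrite IH. tauto.
  - rewrite IH, IH2. tauto.
  - assert (E : forall d, pull_env (lift_ren H s) (ext_env e d) = ext_env (pull_env H e) d).
    { intros d. apply functional_extensionality_dep. intros [v|]; reflexivity. }
    split; intros [d Hd]; exists d; [rewrite <- E; apply IH|rewrite <- E in Hd; apply IH in Hd];
      exact Hd.
Qed.

Definition aut_env (sigma : autfun M) (V : Type) (vs : V -> sort L)
  (e : forall v, dom M (vs v)) : forall v, dom M (vs v) :=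
  fun v => sigma (vs v) (e v).

Lemma eval_aut (sigma : autfun M) (Hs : is_aut sigma) (V : Type) (vs : V -> sort L)
  (e : forall v, dom M (vs v)) :
  (forall s (t : term vs s), eval_term (aut_env sigma e) t = sigma s (eval_term e t)) /\
  (forall l (ts : terms vs l), eval_terms (aut_env sigma e) ts = hmap sigma (eval_terms e ts)).
Proof.
  destruct Hs as [_ [Hf _]].
  apply term_terms_mut; simpl.
  - reflexivity.
  - intros g ts IH. rewrite IH, Hf. reflexivity.
  - reflexivity.
  - intros s l t IHt ts IHts. rewrite IHt, IHts. reflexivity.
Qed.

Lemma sat_aut (sigma : autfun M) (Hs : is_aut sigma) (V : Type) (vs : V -> sort L)
  (phi : formula vs) : forall e, sat phi (aut_env sigma e) <-> sat phi e.
Proof.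
  pose proof Hs as [Hbij [_ Hr]].
  induction phi as [V vs s t1 t2|V vs r ts|V vs psi IH|V vs psi IH chi IH2|V vs s psi IH];
    intros e; simpl.
  - rewrite !(proj1 (eval_aut Hs e)). destruct (Hbij s) as [g [Hg _]]. split; intros E.
    + rewrite <- (Hg (eval_term e t1)), <- (Hg (eval_term e t2)), E. reflexivity.
    + rewrite E. reflexivity.
  - rewrite (proj2 (eval_aut Hs e)). apply Hr.
  - rewrite IH. tauto.
  - rewrite IH, IH2. tauto.
  - destruct (Hbij s) as [g [_ Hg]].
    assert (E : forall d, aut_env sigma (ext_env e d) = ext_env (aut_env sigma e) (sigma s d)).
    { intros d. apply functional_extensionality_dep. intros [v|]; reflexivity. }
    split; intros [d Hd].
    + exists (g d). apply IH. rewrite E, Hg. exact Hd.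
    + exists (sigma s d). rewrite <- E. apply IH. exact Hd.
Qed.

Lemma term_support (V : Type) (vs : V -> sort L) :
  (forall s (t : term vs s), exists F : list V, forall e e' : forall v, dom M (vs v),
     agree_on F e e' -> eval_term e t = eval_term e' t) /\
  (forall l (ts : terms vs l), exists F : list V, forall e e' : forall v, dom M (vs v),
     agree_on F e e' -> eval_terms e ts = eval_terms e' ts).
Proof.
  apply term_terms_mut; simpl.
  - intros x. exists (x :: nil). intros e e' He. apply He. left; reflexivity.
  - intros g ts [F HF]. exists F. intros e e' He. rewrite (HF e e' He). reflexivity.
  - exists nil. reflexivity.
  - intros s l t [F1 H1] ts [F2 H2]. exists (F1 ++ F2). intros e e' He.
    apply agree_on_app in He. rewrite (H1 e e'), (H2 e e'); tauto.
Qed.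

Definition supports (V : Type) (vs : V -> sort L) (F : list V) (phi : formula vs) : Prop :=
  forall e e' : forall v, dom M (vs v), agree_on F e e' -> (sat phi e <-> sat phi e').

Fixpoint somes (V : Type) (l : list (option V)) : list V :=
  match l with
  | nil => nil
  | Some v :: l' => v :: somes l'
  | None :: l' => somes l'
  end.

Lemma in_somes (V : Type) (l : list (option V)) v : In (Some v) l -> In v (somes l).
Proof.
  induction l as [|[w|] l IH]; simpl; [tauto| |].
  - intros [E|E]; [left; congruence|right; auto].
  - intros [E|E]; [discriminate|auto].
Qed.

Lemma sat_support (V : Type) (vs : V -> sort L) (phi : formula vs) :
  exists F : list V, supports F phi.
Proof.
  unfold supports.
  induction phi as [V vs s t1 t2|V vs r ts|V vs psi IH|V vs psi IH chi IH2|V vs s psi IH];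
    simpl.
  - destruct (proj1 (term_support vs) s t1) as [F1 H1].
    destruct (proj1 (term_support vs) s t2) as [F2 H2].
    exists (F1 ++ F2). intros e e' He. apply agree_on_app in He.
    rewrite (H1 e e'), (H2 e e'); tauto.
  - destruct (proj2 (term_support vs) _ ts) as [F HF]. exists F. intros e e' He.
    rewrite (HF e e' He). tauto.
  - destruct IH as [F HF]. exists F. intros e e' He. rewrite (HF e e' He). tauto.
  - destruct IH as [F1 H1], IH2 as [F2 H2]. exists (F1 ++ F2). intros e e' He.
    apply agree_on_app in He. rewrite (H1 e e'), (H2 e e'); tauto.
  - destruct IH as [F HF]. exists (somes F). intros e e' He.
    assert (Hd : forall d : dom M s, agree_on F (ext_env e d) (ext_env e' d)).
    { intros d [v|] Hv; simpl; [apply He, in_somes, Hv|reflexivity]. }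
    split; intros [d Hd']; exists d; [apply (HF _ _ (Hd d))|apply (HF _ _ (Hd d))]; exact Hd'.
Qed.

End Satisfaction.

Section Automorphisms.
Variable L : signature.
Variable M : structure L.

Lemma autfun_ext (sigma tau : autfun M) : (forall s x, sigma s x = tau s x) -> sigma = tau.
Proof.
  intros E. apply functional_extensionality_dep; intros s.
  apply functional_extensionality; auto.
Qed.

Lemma hmap_ext (g1 g2 : forall s, dom M s -> dom M s) :
  (forall s x, g1 s x = g2 s x) -> forall l (t : htuple (dom M) l), hmap g1 t = hmap g2 t.
Proof.
  intros Hg l. induction l as [|s l IH]; simpl; intros t; [reflexivity|].
  destruct t as [x t]. simpl. rewrite Hg, IH. reflexivity.
Qed.

Lemma hmap_comp (g1 g2 : forall s, dom M s -> dom M s) l (t : htuple (dom M) l) :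
  hmap g1 (hmap g2 t) = hmap (fun s x => g1 s (g2 s x)) t.
Proof.
  induction l as [|s l IH]; simpl; [reflexivity|].
  destruct t as [x t]. simpl. rewrite IH. reflexivity.
Qed.

Lemma hmap_id l (t : htuple (dom M) l) : hmap (fun s x => x) t = t.
Proof.
  induction l as [|s l IH]; simpl; destruct t; [reflexivity|].
  simpl. rewrite IH. reflexivity.
Qed.

Definition aut_id : autfun M := fun s x => x.
Definition aut_comp (sigma tau : autfun M) : autfun M := fun s x => sigma s (tau s x).

Lemma is_aut_id : is_aut aut_id.
Proof.
  split; [|split].
  - intros s. exists (fun x => x). split; reflexivity.
  - intros f args. unfold aut_id. rewrite hmap_id. reflexivity.
  - intros r args. unfold aut_id. rewrite hmap_id. tauto.
Qed.

Lemma is_aut_comp (sigma tau : autfun M) :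
  is_aut sigma -> is_aut tau -> is_aut (aut_comp sigma tau).
Proof.
  intros [Hb1 [Hf1 Hr1]] [Hb2 [Hf2 Hr2]]. unfold aut_comp. split; [|split].
  - intros s. destruct (Hb1 s) as [g1 [A1 B1]], (Hb2 s) as [g2 [A2 B2]].
    exists (fun x => g2 (g1 x)). split; intros x.
    + rewrite A1, A2. reflexivity.
    + rewrite B2, B1. reflexivity.
  - intros f args. rewrite Hf2, Hf1, hmap_comp. reflexivity.
  - intros r args. rewrite <- hmap_comp, Hr1, Hr2. tauto.
Qed.

Lemma is_aut_comp_n (tau : nat -> autfun M) k :
  (forall j, j < k -> is_aut (tau j)) -> is_aut (comp_n k tau).
Proof.
  induction k as [|k IH]; intros H; [apply is_aut_id|].
  change (comp_n (S k) tau) with (aut_comp (comp_n k tau) (tau k)).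
  apply is_aut_comp; auto.
Qed.

Lemma is_aut_inv (sigma g : autfun M) : is_aut sigma ->
  (forall s x, g s (sigma s x) = x) -> (forall s x, sigma s (g s x) = x) -> is_aut g.
Proof.
  intros [Hb [Hf Hr]] A B.
  assert (Hgs : forall l (t : htuple (dom M) l), hmap sigma (hmap g t) = t).
  { intros l t. rewrite hmap_comp, (hmap_ext (g2 := fun s x => x)) by auto. apply hmap_id. }
  split; [|split].
  - intros s. exists (sigma s). split; auto.
  - intros f args. rewrite <- (A _ (@funs L M f (hmap g args))), Hf, Hgs. reflexivity.
  - intros r args. rewrite <- (Hr _ (hmap g args)), Hgs. tauto.
Qed.

Lemma is_aut_inverse (sigma : autfun M) : is_aut sigma -> exists g : autfun M,
  is_aut g /\ (forall s x, g s (sigma s x) = x) /\ (forall s x, sigma s (g s x) = x).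
Proof.
  intros Hs. pose proof Hs as [Hb _].
  set (g := fun s => proj1_sig (constructive_indefinite_description _ (Hb s))).
  assert (Hg : forall s, (forall x, g s (sigma s x) = x) /\ (forall x, sigma s (g s x) = x))
    by (intros s; exact (proj2_sig (constructive_indefinite_description _ (Hb s)))).
  exists g. split; [apply (is_aut_inv Hs)|split]; intros s x; apply (Hg s).
Qed.

Lemma aut_env_pair (sigma : autfun M) (I J : Type) (sI : I -> sort L) (sJ : J -> sort L)
  (c : tup M sI) (d : tup M sJ) :
  aut_env sigma (pair_env c d) = pair_env (apply_tup sigma c) (apply_tup sigma d).
Proof. apply functional_extensionality_dep. intros [i|j]; reflexivity. Qed.

Lemma apply_tup_inv (sigma tau : autfun M) (I : Type) (srt : I -> sort L) (c : tup M srt) :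
  (forall s x, tau s (sigma s x) = x) -> apply_tup tau (apply_tup sigma c) = c.
Proof. intros H. apply functional_extensionality_dep. intros i. apply H. Qed.

End Automorphisms.
Arguments aut_id {L M}.

Section Inverse.
Variable L : signature.
Variable M : structure L.

Lemma pull_env_swap (I J : Type) (sI : I -> sort L) (sJ : J -> sort L)
  (c : tup M sJ) (d : tup M sI) :
  pull_env (swap_sort sI sJ) (pair_env c d) = pair_env d c.
Proof.
  apply functional_extensionality_dep. intros [i|j]; unfold pull_env; simpl;
    [generalize (swap_sort sI sJ (inl i))|generalize (swap_sort sI sJ (inr j))];
    simpl; intros p; rewrite (proof_irrelevance _ p eq_refl); reflexivity.
Qed.

Lemma sat_swap (I J : Type) (sI : I -> sort L) (sJ : J -> sort L)
  (phi : formula (sum_sort sI sJ)) (c : tup M sJ) (d : tup M sI) :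
  sat (rename (swap_sort sI sJ) phi) (pair_env c d) <-> sat phi (pair_env d c).
Proof. rewrite sat_rename, pull_env_swap. tauto. Qed.

Lemma inv_set_A_pi (I J : Type) (sI : I -> sort L) (sJ : J -> sort L)
  (pi : ptype (sum_sort sI sJ)) (a : tup M sI) (b : tup M sJ) :
  set_eq (inv_set (A_pi pi a b)) (A_pi (swap_ptype pi) b a).
Proof.
  intros sigma. split.
  - intros [tau [[Htau Hpi] Hinv]].
    assert (Hsigma : is_aut sigma) by (apply (is_aut_inv Htau); apply Hinv).
    split; [exact Hsigma|].
    intros psi [phi [Hphi ->]]. apply sat_swap.
    rewrite <- (sat_aut Htau), aut_env_pair, apply_tup_inv by apply Hinv.
    exact (Hpi phi Hphi).
  - intros [Hsigma Hpi]. destruct (is_aut_inverse Hsigma) as [g [Hg [A B]]].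
    exists g. split; [split; [exact Hg|]|split; auto].
    intros phi Hphi.
    assert (H1 : sat phi (pair_env a (apply_tup sigma b))).
    { apply sat_swap, Hpi. exists phi. auto. }
    rewrite <- (sat_aut Hg), aut_env_pair, apply_tup_inv in H1 by exact A. exact H1.
Qed.

End Inverse.

Section Connectives.
Variable L : signature.
Variable M : structure L.

Definition fiff (V : Type) (vs : V -> sort L) (p q : formula vs) : formula vs :=
  fand (fneg (fand p (fneg q))) (fneg (fand q (fneg p))).

Lemma sat_fiff (V : Type) (vs : V -> sort L) (p q : formula vs) e :
  sat (M:=M) (fiff p q) e <-> (sat p e <-> sat q e).
Proof. simpl. tauto. Qed.

Definition fconj (V : Type) (vs : V -> sort L) (p : formula vs) (l : list (formula vs)) :
  formula vs := fold_right (@fand L V vs) p l.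

Lemma sat_fconj (V : Type) (vs : V -> sort L) (p : formula vs) l e :
  sat (M:=M) (fconj p l) e <-> (sat p e /\ forall q, In q l -> sat q e).
Proof.
  induction l as [|q l IH]; simpl; [firstorder|].
  rewrite IH. firstorder congruence.
Qed.

Definition env_upd (V : Type) (vs : V -> sort L) (e : forall v, dom M (vs v)) (v0 : V)
  (d : dom M (vs v0)) : forall v, dom M (vs v) :=
  fun v => match excluded_middle_informative (v0 = v) with
           | left p => eq_rect v0 (fun w => dom M (vs w)) d v p
           | right _ => e v
           end.
Arguments env_upd [V vs] e v0 d v.

Lemma env_upd_eq (V : Type) (vs : V -> sort L) (e : forall v, dom M (vs v)) v0 d :
  env_upd e v0 d v0 = d.
Proof.
  unfold env_upd. destruct (excluded_middle_informative (v0 = v0)) as [p|n]; [|tauto].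
  rewrite (proof_irrelevance _ p eq_refl). reflexivity.
Qed.

Lemma env_upd_neq (V : Type) (vs : V -> sort L) (e : forall v, dom M (vs v)) v0 d v :
  v0 <> v -> env_upd e v0 d v = e v.
Proof. unfold env_upd. destruct (excluded_middle_informative (v0 = v)); tauto. Qed.

Definition bind_map (V : Type) (v0 v : V) : option V :=
  match excluded_middle_informative (v0 = v) with
  | left _ => None
  | right _ => Some v
  end.

Definition bind_map_sort (V : Type) (vs : V -> sort L) (v0 : V) :
  forall v, ext vs (vs v0) (bind_map v0 v) = vs v :=
  fun v => match excluded_middle_informative (v0 = v) as d
     return ext vs (vs v0) (match d with left _ => None | right _ => Some v end) = vs v with
  | left p => f_equal vs p
  | right _ => eq_refl
  end.

Definition fex_var (V : Type) (vs : V -> sort L) (v0 : V) (phi : formula vs) : formula vs :=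
  fex (rename (bind_map_sort vs v0) phi).

Lemma sat_bind (V : Type) (vs : V -> sort L) (v0 : V) (phi : formula vs) e d :
  sat (M:=M) (rename (bind_map_sort vs v0) phi) (ext_env e d) <-> sat phi (env_upd e v0 d).
Proof.
  rewrite sat_rename. replace (pull_env (bind_map_sort vs v0) (ext_env e d)) with (env_upd e v0 d);
    [tauto|].
  apply functional_extensionality_dep. intros v.
  unfold pull_env, env_upd, bind_map_sort, bind_map.
  destruct (excluded_middle_informative (v0 = v)) as [q|q]; [destruct q|]; reflexivity.
Qed.

Lemma sat_fex_var (V : Type) (vs : V -> sort L) (v0 : V) (phi : formula vs) e :
  sat (M:=M) (fex_var v0 phi) e <-> exists d, sat phi (env_upd e v0 d).
Proof.
  unfold fex_var. simpl. split; intros [d Hd]; exists d; apply sat_bind; exact Hd.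
Qed.

Definition fex_vars (V : Type) (vs : V -> sort L) (l : list V) (phi : formula vs) :
  formula vs := fold_right (@fex_var V vs) phi l.

Lemma sat_fex_vars (V : Type) (vs : V -> sort L) (l : list V) (phi : formula vs) :
  forall e, sat (M:=M) (fex_vars l phi) e <->
    exists e', (forall v, ~ In v l -> e' v = e v) /\ sat phi e'.
Proof.
  induction l as [|v0 l IH]; intros e.
  - simpl. split; [intros H; exists e; auto|].
    intros [e' [E H]]. replace e with e'; [exact H|].
    apply functional_extensionality_dep; intros v; apply E; auto.
  - change (fex_vars (v0 :: l) phi) with (fex_var v0 (fex_vars l phi)).
    rewrite sat_fex_var. split.
    + intros [d Hd]. apply IH in Hd. destruct Hd as [e' [E H]]. exists e'. split; [|exact H].
      intros v Hv. rewrite E by (intro; apply Hv; right; assumption).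
      apply env_upd_neq. intros ->. apply Hv. left. reflexivity.
    + intros [e' [E H]]. exists (e' v0). apply IH. exists e'. split; [|exact H].
      intros v Hv. destruct (excluded_middle_informative (v0 = v)) as [->|n].
      * rewrite env_upd_eq. reflexivity.
      * rewrite env_upd_neq by exact n. apply E. intros [C|C]; [exact (n C)|exact (Hv C)].
Qed.

End Connectives.
Arguments env_upd [L M V vs] e v0 d v.

(** * Cardinal arithmetic *)

Lemma zorn_union (T : Type) (P : (T -> Prop) -> Prop) :
  (forall F : (T -> Prop) -> Prop, (forall X, F X -> P X) ->
     (forall X Y, F X -> F Y -> (forall t, X t -> Y t) \/ (forall t, Y t -> X t)) ->
     P (fun t => exists X, F X /\ X t)) ->
  exists A, P A /\ forall B, (forall t, A t -> B t) -> P B -> forall t, B t -> A t.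
Proof.
  intros HF.
  destruct (@classical_sets.Zorn_bigcup T P) as [A [PA Amax]].
  - intros F FP Ftot.
    replace (classical_sets.bigcup F (fun X => X)) with (fun t => exists X, F X /\ X t).
    + apply HF; [exact FP|]. intros X Y HX HY. exact (Ftot X Y HX HY).
    + apply functional_extensionality; intros t.
      apply propositional_extensionality; split.
      * intros [X [H1 H2]]. exists X; auto.
      * intros [X H1 H2]. eauto.
  - exists A. split; [exact PA|]. intros B AB PB t Bt.
    apply NNPP. intros Nt. apply (Amax B); [|exact PB].
    split; [exact AB|]. intros BA. exact (Nt (BA t Bt)).
Qed.

Definition card_le (A B : Type) : Prop := exists f : A -> B, injective f.

Lemma card_le_trans (A B C : Type) : card_le A B -> card_le B C -> card_le A C.
Proof. intros [f Hf] [g Hg]. exists (fun x => g (f x)). intros x y E. apply Hf, Hg, E. Qed.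

Lemma lt_card_of_le (A B K : Type) : card_le A B -> lt_card B K -> lt_card A K.
Proof.
  intros AB [BK KB]. split.
  - exact (card_le_trans AB BK).
  - intros KA. exact (KB (card_le_trans KA AB)).
Qed.

Lemma finite_or_infinite (X : Type) : card_le nat X \/ exists l : list X, forall x, In x l.
Proof.
  destruct (classic (exists l : list X, forall x, In x l)) as [H|H]; [right; exact H|left].
  assert (Hnew : forall l : list X, exists x, ~ In x l).
  { intros l. apply NNPP. intros C. apply H. exists l. intros x. apply NNPP. eauto. }
  destruct (choice _ Hnew) as [g Hg].
  set (s := fix s (n : nat) : list X := match n with O => nil | S m => g (s m) :: s m end).
  exists (fun n => g (s n)).
  assert (Hin : forall n m, n < m -> In (g (s n)) (s m)).
  { intros n m Hnm. induction m as [|m IH]; [lia|].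
    simpl. destruct (Nat.eq_dec n m) as [->|Hne]; [left; reflexivity|right; apply IH; lia]. }
  intros n m E. destruct (Nat.lt_total n m) as [Hl|[Hl|Hl]]; [|exact Hl|].
  - exfalso. apply (Hg (s m)). rewrite <- E. apply Hin, Hl.
  - exfalso. apply (Hg (s n)). rewrite E. apply Hin, Hl.
Qed.

Lemma list_index (X : Type) (l : list X) : exists idx : X -> nat,
  forall x, In x l -> nth_error l (idx x) = Some x.
Proof.
  apply (choice (fun x n => In x l -> nth_error l n = Some x)). intros x.
  destruct (classic (In x l)) as [H|H].
  - destruct (In_nth_error _ _ H) as [n Hn]. exists n. auto.
  - exists 0. tauto.
Qed.

Lemma finite_card_le_nat (X : Type) (l : list X) : (forall x, In x l) -> card_le X nat.
Proof.
  intros Hl. destruct (list_index l) as [idx Hidx]. exists idx. intros x y E.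
  pose proof (Hidx x (Hl x)) as A. rewrite E, Hidx in A by auto. congruence.
Qed.

Lemma hotel_shift (X : Type) (h : nat -> X) (m : nat) : injective h ->
  exists shift : X -> X, injective shift /\ forall x k, k < m -> shift x <> h k.
Proof.
  intros Hh.
  assert (Hs : forall x, exists z,
    (exists k, x = h k /\ z = h (k + m)) \/ ((forall k, x <> h k) /\ z = x)).
  { intros x. destruct (classic (exists k, x = h k)) as [[k ->]|N].
    - exists (h (k + m)). left. eauto.
    - exists x. right. split; [|reflexivity]. intros k E. apply N. eauto. }
  destruct (choice _ Hs) as [shift Hshift].
  exists shift. split.
  - intros x x' E.
    destruct (Hshift x) as [[k [-> Ek]]|[Nk Ek]], (Hshift x') as [[k' [-> Ek']]|[Nk' Ek']];
      rewrite Ek, Ek' in E.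
    + apply Hh in E. f_equal. lia.
    + exfalso. exact (Nk' _ (eq_sym E)).
    + exfalso. exact (Nk _ E).
    + exact E.
  - intros x k Hk E. destruct (Hshift x) as [[j [-> Ej]]|[Nj Ej]]; rewrite Ej in E.
    + apply Hh in E. lia.
    + exact (Nj k E).
Qed.

Section Doubling.
Variable X : Type.

Definition base (x : X + X) : X := match x with inl i => i | inr i => i end.
Definition tag (x : X + X) : nat := match x with inl _ => 0 | inr _ => 1 end.

Lemma sum_eq_base_tag (x x' : X + X) : base x = base x' -> tag x = tag x' -> x = x'.
Proof. destruct x, x'; simpl; intros E T; congruence. Qed.

Definition doubling_dom (G : (X + X) * X -> Prop) (i : X) : Prop := exists y, G (inl i, y).

(* [G] is the graph of an injection from [D + D] into [D], where [D] is its domain. *)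
Definition doubling (G : (X + X) * X -> Prop) : Prop :=
  (forall x y y', G (x, y) -> G (x, y') -> y = y') /\
  (forall x x' y, G (x, y) -> G (x', y) -> x = x') /\
  (forall x y, G (x, y) -> doubling_dom G (base x)) /\
  (forall x, doubling_dom G (base x) -> exists y, G (x, y)) /\
  (forall x y, G (x, y) -> doubling_dom G y).

Lemma doubling_union (F : ((X + X) * X -> Prop) -> Prop) :
  (forall G, F G -> doubling G) ->
  (forall G G', F G -> F G' -> (forall t, G t -> G' t) \/ (forall t, G' t -> G t)) ->
  doubling (fun t => exists G, F G /\ G t).
Proof.
  intros FD Ftot.
  assert (Both : forall G G' t t', F G -> F G' -> G t -> G' t' ->
                   exists G'', F G'' /\ G'' t /\ G'' t').
  { intros G G' t t' FG FG' Gt Gt'.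
    destruct (Ftot G G' FG FG') as [S|S]; [exists G'|exists G]; auto. }
  assert (Dom : forall G i, F G -> doubling_dom G i ->
                  doubling_dom (fun t => exists G, F G /\ G t) i).
  { intros G i FG [y Hy]. exists y, G. auto. }
  split; [|split; [|split; [|split]]].
  - intros x y y' [G [FG Gy]] [G' [FG' Gy']].
    destruct (Both _ _ _ _ FG FG' Gy Gy') as [G'' [FG'' [A B]]].
    exact (proj1 (FD G'' FG'') x y y' A B).
  - intros x x' y [G [FG Gx]] [G' [FG' Gx']].
    destruct (Both _ _ _ _ FG FG' Gx Gx') as [G'' [FG'' [A B]]].
    exact (proj1 (proj2 (FD G'' FG'')) x x' y A B).
  - intros x y [G [FG Gy]]. exact (Dom G _ FG (proj1 (proj2 (proj2 (FD G FG))) x y Gy)).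
  - intros x [y [G [FG Gy]]].
    destruct (proj1 (proj2 (proj2 (proj2 (FD G FG)))) x (ex_intro _ y Gy)) as [z Hz].
    exists z, G. auto.
  - intros x y [G [FG Gy]]. exact (Dom G _ FG (proj2 (proj2 (proj2 (proj2 (FD G FG)))) x y Gy)).
Qed.

Definition doubling_extension (G : (X + X) * X -> Prop) (h : nat -> X) (t : (X + X) * X) :=
  G t \/ exists n, base (fst t) = h n /\ snd t = h (2 * n + tag (fst t)).

Lemma doubling_extend (G : (X + X) * X -> Prop) (h : nat -> X) :
  doubling G -> injective h -> (forall n, ~ doubling_dom G (h n)) ->
  doubling (doubling_extension G h).
Proof.
  intros [Gfun [Ginj [Gbase [Gtot Grng]]]] Hh Hout.
  assert (Tag : forall x, tag x < 2) by (intros [i|i]; simpl; lia).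
  assert (Dom : forall i, doubling_dom G i -> doubling_dom (doubling_extension G h) i).
  { intros i [y Hy]. exists y. left. exact Hy. }
  assert (DomNew : forall n, doubling_dom (doubling_extension G h) (h n)).
  { intros n. exists (h (2 * n + 0)). right. exists n. auto. }
  unfold doubling_extension. split; [|split; [|split; [|split]]].
  - intros x y y' [A|[n [Bn Yn]]] [A'|[n' [Bn' Yn']]]; cbn [fst snd] in *.
    + exact (Gfun x y y' A A').
    + exfalso. apply (Hout n'). rewrite <- Bn'. exact (Gbase x y A).
    + exfalso. apply (Hout n). rewrite <- Bn. exact (Gbase x y' A').
    + rewrite Bn in Bn'. apply Hh in Bn'. subst. reflexivity.
  - intros x x' y [A|[n [Bn Yn]]] [A'|[n' [Bn' Yn']]]; cbn [fst snd] in *.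
    + exact (Ginj x x' y A A').
    + exfalso. apply (Hout (2 * n' + tag x')). rewrite <- Yn'. exact (Grng x y A).
    + exfalso. apply (Hout (2 * n + tag x)). rewrite <- Yn. exact (Grng x' y A').
    + rewrite Yn in Yn'. apply Hh in Yn'. pose proof (Tag x). pose proof (Tag x').
      assert (n = n') by lia. subst n'.
      apply sum_eq_base_tag; [congruence|lia].
  - intros x y [A|[n [Bn _]]]; cbn [fst snd] in *.
    + exact (Dom _ (Gbase x y A)).
    + rewrite Bn. apply DomNew.
  - intros x [y [A|[n [Bn _]]]]; cbn [fst snd] in *.
    + destruct (Gtot x (ex_intro _ y A)) as [z Hz]. exists z. left. exact Hz.
    + exists (h (2 * n + tag x)). right. exists n. auto.
  - intros x y [A|[n [_ Yn]]]; cbn [fst snd] in *.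
    + exact (Dom _ (Grng x y A)).
    + rewrite Yn. apply DomNew.
Qed.

Lemma doubling_cofinite : exists G, doubling G /\
  exists l : list X, forall i, ~ doubling_dom G i -> In i l.
Proof.
  destruct (@zorn_union _ doubling doubling_union) as [G [HG Gmax]].
  exists G. split; [exact HG|].
  destruct (finite_or_infinite {i : X | ~ doubling_dom G i}) as [[h Hh]|[l Hl]].
  - exfalso.
    set (h' := fun n => proj1_sig (h n)).
    assert (Hh' : injective h').
    { intros n m E. apply Hh, eq_sig_hprop; [|exact E]. intros i p q. apply proof_irrelevance. }
    assert (Hout : forall n, ~ doubling_dom G (h' n)) by (intros n; exact (proj2_sig (h n))).
    apply (Hout 0). exists (h' (2 * 0 + 0)).
    apply (Gmax (doubling_extension G h')).
    + intros t Ht. left. exact Ht.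
    + apply doubling_extend; assumption.
    + right. exists 0. auto.
  - exists (map (@proj1_sig _ _) l). intros i Hi.
    change i with (proj1_sig (exist (fun i => ~ doubling_dom G i) i Hi)). apply in_map, Hl.
Qed.

Lemma card_le_sum_diag : card_le nat X -> card_le (X + X) X.
Proof.
  intros [h Hh].
  destruct doubling_cofinite as [G [[_ [Ginj [_ [Gtot _]]]] [l Hl]]].
  destruct (list_index l) as [idx Hidx].
  assert (Hidx_lt : forall i, ~ doubling_dom G i -> idx i < length l).
  { intros i Hi. apply nth_error_Some. rewrite Hidx by auto. discriminate. }
  destruct (hotel_shift (2 * length l) Hh) as [shift [Hshift Hfar]].
  assert (HG : forall x, exists y, doubling_dom G (base x) -> G (x, y)).
  { intros x. destruct (classic (doubling_dom G (base x))) as [D|D].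
    - destruct (Gtot x D) as [y Hy]. eauto.
    - exists (h 0). tauto. }
  destruct (choice _ HG) as [g Hg].
  assert (Tag : forall x, tag x < 2) by (intros [i|i]; simpl; lia).
  exists (fun x => if excluded_middle_informative (doubling_dom G (base x)) then shift (g x)
                 else h (2 * idx (base x) + tag x)).
  intros x x' E.
  destruct (excluded_middle_informative (doubling_dom G (base x))) as [D|D],
    (excluded_middle_informative (doubling_dom G (base x'))) as [D'|D'].
  - apply Hshift in E. apply (Ginj x x' (g x)); [apply Hg, D|rewrite E; apply Hg, D'].
  - exfalso. refine (Hfar _ _ _ E).
    pose proof (Hidx_lt _ D'). pose proof (Tag x'). lia.
  - exfalso. refine (Hfar _ _ _ (eq_sym E)).
    pose proof (Hidx_lt _ D). pose proof (Tag x). lia.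
  - apply Hh in E. pose proof (Tag x). pose proof (Tag x').
    assert (Ei : idx (base x) = idx (base x')) by lia.
    apply sum_eq_base_tag; [|lia].
    pose proof (Hidx _ (Hl _ D)) as U. rewrite Ei, (Hidx _ (Hl _ D')) in U. congruence.
Qed.

End Doubling.

Lemma lt_card_sum_diag (X K : Type) : lt_card nat K -> lt_card X K -> lt_card (X + X) K.
Proof.
  intros HN HX. destruct (finite_or_infinite X) as [Hinf|[l Hl]].
  - exact (lt_card_of_le (card_le_sum_diag Hinf) HX).
  - apply (lt_card_of_le (B := nat)); [|exact HN].
    apply (finite_card_le_nat (l := map inl l ++ map inr l)).
    intros [i|i]; apply in_or_app; [left|right]; apply in_map, Hl.
Qed.

Lemma lt_card_ord_prod (X K : Type) : lt_card nat K -> lt_card X K ->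
  forall m, lt_card ({k : nat | k < S m} * X) K.
Proof.
  intros HN HX. induction m as [|m IH].
  - apply (lt_card_of_le (B := X)); [|exact HX]. exists snd.
    intros [[k Hk] i] [[k' Hk'] i'] E. simpl in E. subst i'.
    assert (k = k') by lia. subst k'. rewrite (proof_irrelevance _ Hk Hk'). reflexivity.
  - apply (lt_card_of_le (B := ({k : nat | k < S m} * X) + ({k : nat | k < S m} * X))).
    2: apply lt_card_sum_diag; assumption.
    assert (H0 : 0 < S m) by lia.
    exists (fun x => match lt_dec (proj1_sig (fst x)) (S m) with
                     | left H => inl (exist _ (proj1_sig (fst x)) H, snd x)
                     | right _ => inr (exist _ 0 H0, snd x) end).
    intros [[k Hk] i] [[k' Hk'] i'] E. simpl in E.
    destruct (lt_dec k (S m)) as [A|A], (lt_dec k' (S m)) as [B|B];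
      try discriminate; injection E; intros; subst.
    + rewrite (proof_irrelevance _ Hk Hk'). reflexivity.
    + assert (k = k') by lia. subst k'. rewrite (proof_irrelevance _ Hk Hk'). reflexivity.
Qed.

(** * Realizing types in many variables *)

Lemma env_upd_pair_inr (L : signature) (M : structure L) (P W : Type) (ps : P -> sort L)
  (ws : W -> sort L) (p : tup M ps) (w : tup M ws) (i : W) (d : dom M (ws i)) :
  env_upd (pair_env p w) (inr i) d = pair_env p (env_upd w i d).
Proof.
  apply functional_extensionality_dep. intros [v|j]; unfold env_upd; simpl.
  - destruct (excluded_middle_informative (inr i = inl v)); [discriminate|reflexivity].
  - destruct (excluded_middle_informative (inr i = inr j)) as [q|q],
      (excluded_middle_informative (i = j)) as [r|r]; try congruence.
    destruct r. rewrite (proof_irrelevance _ q eq_refl). reflexivity.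
Qed.

Definition inr_vars (P W : Type) (F : list (P + W)) : list W :=
  flat_map (fun v => match v with inr j => j :: nil | inl _ => nil end) F.

Lemma in_inr_vars (P W : Type) (F : list (P + W)) j : In (inr j) F -> In j (inr_vars F).
Proof. intros H. apply in_flat_map. exists (inr j). simpl. auto. Qed.

Section Realize.
Variable L : signature.
Variable M : structure L.
Variable K : Type.
Hypothesis Hsat : saturated K M.
Variables (P W : Type) (ps : P -> sort L) (ws : W -> sort L) (p : tup M ps).
Hypothesis HPW : lt_card (P + W) K.
Variable Sigma : formula (sum_sort ps ws) -> Prop.
Hypothesis Hfin : forall l, (forall phi, In phi l -> Sigma phi) ->
  exists w : tup M ws, forall phi, In phi l -> sat phi (pair_env p w).

Definition wval := {j : W & dom M (ws j)}.

Definition assigned (G : wval -> Prop) (j : W) : Prop := exists d, G (existT _ j d).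

Definition functional (G : wval -> Prop) : Prop :=
  forall j d d', G (existT _ j d) -> G (existT _ j d') -> d = d'.

Definition consistent (G : wval -> Prop) : Prop :=
  functional G /\ forall (l : list (formula (sum_sort ps ws))) (J : list W),
    (forall phi, In phi l -> Sigma phi) ->
    exists w : tup M ws, (forall j d, In j J -> G (existT _ j d) -> w j = d) /\
      (forall phi, In phi l -> sat phi (pair_env p w)).

Lemma consistent_union (F : (wval -> Prop) -> Prop) : (forall G, F G -> consistent G) ->
  (forall G G', F G -> F G' -> (forall t, G t -> G' t) \/ (forall t, G' t -> G t)) ->
  consistent (fun t => exists G, F G /\ G t).
Proof.
  intros FC Ftot. set (U := fun t => exists G, F G /\ G t).
  assert (Ufun : functional U).
  { intros j d d' [G [FG HG]] [G' [FG' HG']].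
    destruct (Ftot G G' FG FG') as [S|S]; [apply S in HG|apply S in HG'].
    - exact (proj1 (FC G' FG') j d d' HG HG').
    - exact (proj1 (FC G FG) j d d' HG HG'). }
  split; [exact Ufun|]. intros l J Hl.
  assert (HX : exists G, (F G \/ forall t, ~ G t) /\
             forall j d, In j J -> U (existT _ j d) -> G (existT _ j d)).
  { induction J as [|i J IH].
    - exists (fun _ => False). split; [right; auto|]. intros j d [].
    - destruct IH as [G1 [HG1 A1]].
      destruct (classic (assigned U i)) as [[d [G [FG HG]]]|Nd].
      + assert (Z : exists G', F G' /\ (forall t, G1 t -> G' t) /\ (forall t, G t -> G' t)).
        { destruct HG1 as [FG1|EG1].
          - destruct (Ftot G1 G FG1 FG) as [S|S]; [exists G|exists G1]; auto.
          - exists G. split; [exact FG|]. split; [|auto]. intros t Ht. exfalso. exact (EG1 t Ht). }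
        destruct Z as [G' [FG' [S1 S2]]]. exists G'. split; [left; exact FG'|].
        intros j d' [<-|Hj] Ud'.
        * assert (d' = d) by (apply (Ufun i); [exact Ud'|exists G; auto]). subst. auto.
        * apply S1, A1; assumption.
      + exists G1. split; [exact HG1|]. intros j d' [<-|Hj] Ud'.
        * exfalso. apply Nd. exists d'. exact Ud'.
        * apply A1; assumption. }
  destruct HX as [G [[FG|EG] A]].
  - destruct (proj2 (FC G FG) l J Hl) as [w [Aw Sw]]. exists w. split; [|exact Sw].
    intros j d Hj Ud. apply Aw, A; assumption.
  - destruct (Hfin Hl) as [w Hw]. exists w. split; [|exact Hw].
    intros j d Hj Ud. exfalso. exact (EG _ (A j d Hj Ud)).
Qed.

Definition completion (G : wval -> Prop) (w0 : tup M ws) : tup M ws :=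
  fun j => match excluded_middle_informative (assigned G j) with
           | left H => proj1_sig (constructive_indefinite_description _ H)
           | right _ => w0 j
           end.

Lemma completion_spec (G : wval -> Prop) w0 j d :
  functional G -> G (existT _ j d) -> completion G w0 j = d.
Proof.
  intros Gfun Gd. unfold completion.
  destruct (excluded_middle_informative (assigned G j)) as [H|H]; [|exfalso; exact (H (ex_intro _ d Gd))].
  destruct (constructive_indefinite_description _ H) as [d' Hd']. exact (Gfun j d' d Hd' Gd).
Qed.

Definition fresh (G : wval -> Prop) (i : W) (F : list (P + W)) : list W :=
  filter (fun j => if excluded_middle_informative (j <> i /\ ~ assigned G j) then true else false)
    (inr_vars F).

Lemma in_fresh G i F j : In j (fresh G i F) <-> In j (inr_vars F) /\ j <> i /\ ~ assigned G j.
Proof.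
  unfold fresh. rewrite filter_In.
  destruct (excluded_middle_informative (j <> i /\ ~ assigned G j)); intuition discriminate.
Qed.

Definition extension_formula (G : wval -> Prop) (i : W) (F : list (P + W))
  (chi : formula (sum_sort ps ws)) : formula (ext (sum_sort ps ws) (sum_sort ps ws (inr i))) :=
  rename (bind_map_sort (sum_sort ps ws) (inr i)) (fex_vars (map inr (fresh G i F)) chi).

Lemma sat_extension_formula (G : wval -> Prop) (i : W) (F : list (P + W)) chi
  (wG w : tup M ws) :
  supports M F chi -> sat chi (pair_env p w) ->
  (forall j, In j (inr_vars F) -> j <> i -> assigned G j -> w j = wG j) ->
  sat (extension_formula G i F chi) (ext_env (pair_env p wG) (w i)).
Proof.
  intros HF Hchi Hagree. unfold extension_formula.
  change (ext_env (pair_env p wG) (w i))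
    with (ext_env (s := sum_sort ps ws (inr i)) (pair_env p wG) (w i)).
  rewrite sat_bind, env_upd_pair_inr, sat_fex_vars.
  set (w' := fun j => if excluded_middle_informative (In j (fresh G i F)) then w j
                      else env_upd wG i (w i) j).
  exists (pair_env p w'). split.
  - intros [v|j] Hj; [reflexivity|]. simpl. unfold w'.
    destruct (excluded_middle_informative (In j (fresh G i F))) as [A|A]; [|reflexivity].
    exfalso. apply Hj, in_map, A.
  - refine (proj1 (HF (pair_env p w) (pair_env p w') _) Hchi).
    intros [v|j] Hj; [reflexivity|]. simpl. unfold w'.
    destruct (excluded_middle_informative (In j (fresh G i F))) as [A|A]; [reflexivity|].
    apply in_inr_vars in Hj.
    destruct (excluded_middle_informative (i = j)) as [<-|B].
    + rewrite env_upd_eq. reflexivity.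
    + rewrite env_upd_neq by exact B. apply Hagree; [exact Hj|auto|].
      apply NNPP. intros C. apply A, in_fresh. auto.
Qed.

Definition extension_type (G : wval -> Prop) (i : W)
  (psi : formula (ext (sum_sort ps ws) (sum_sort ps ws (inr i)))) : Prop :=
  exists phi l F, Sigma phi /\ (forall chi, In chi l -> Sigma chi) /\
    supports M F (fconj phi l) /\ psi = extension_formula G i F (fconj phi l).
Arguments extension_type : clear implicits.

Lemma extension_type_fin_sat (G : wval -> Prop) (i : W) (w0 : tup M ws) :
  consistent G -> forall l', (forall psi, In psi l' -> extension_type G i psi) ->
  exists d, forall psi, In psi l' -> sat psi (ext_env (pair_env p (completion G w0)) d).
Proof.
  intros [Gfun Gcons] l' Hl'.
  assert (Collect : exists l J, (forall chi, In chi l -> Sigma chi) /\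
    forall w : tup M ws, (forall chi, In chi l -> sat chi (pair_env p w)) ->
      (forall j d, In j J -> G (existT _ j d) -> w j = d) ->
      forall psi, In psi l' -> sat psi (ext_env (pair_env p (completion G w0)) (w i))).
  { induction l' as [|psi l' IH].
    - exists nil, nil. split; [intros _ []|]. intros w _ _ psi [].
    - destruct IH as [l [J [Sl Hl]]]; [intros; apply Hl'; right; assumption|].
      destruct (Hl' psi (or_introl eq_refl)) as [phi [l0 [F [Sphi [Sl0 [HF ->]]]]]].
      exists ((phi :: l0) ++ l), (inr_vars F ++ J). split.
      + intros chi Hc. apply in_app_or in Hc as [[<-|Hc]|Hc]; auto.
      + intros w Sw Aw psi' [<-|Hp].
        * apply sat_extension_formula; [exact HF| |].
          -- apply sat_fconj. split; [apply Sw; left; reflexivity|].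
             intros chi Hc. apply Sw. right. apply in_or_app. left. exact Hc.
          -- intros j Hj _ [d Hd]. rewrite (Aw j d (in_or_app _ _ _ (or_introl Hj)) Hd).
             symmetry. apply completion_spec; assumption.
        * apply Hl; [intros chi Hc; apply Sw, in_or_app; right; exact Hc| |exact Hp].
          intros j d Hj. apply Aw, in_or_app. right. exact Hj. }
  destruct Collect as [l [J [Sl Hl]]].
  destruct (Gcons l J Sl) as [w [Aw Sw]].
  exists (w i). apply Hl; assumption.
Qed.

Lemma functional_extend (G : wval -> Prop) (i : W) (d : dom M (ws i)) :
  functional G -> ~ assigned G i -> functional (fun t => G t \/ t = existT _ i d).
Proof.
  intros Gfun Ni j e e' [A|A] [B|B].
  - exact (Gfun j e e' A B).
  - exfalso. injection B; intros _ <-. apply Ni. exists e. exact A.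
  - exfalso. injection A; intros _ <-. apply Ni. exists e'. exact B.
  - injection A; intros E1 <-. apply inj_pair2 in E1.
    injection B; intros E2. apply inj_pair2 in E2. congruence.
Qed.

Lemma agree_extend (G : wval -> Prop) (i : W) (d : dom M (ws i)) (w0 w : tup M ws) :
  functional G -> ~ assigned G i ->
  (forall j, j <> i -> assigned G j -> w j = completion G w0 j) -> w i = d ->
  forall j e, G (existT _ j e) \/ existT _ j e = existT _ i d -> w j = e.
Proof.
  intros Gfun Ni A Ai j e [Ge|Ee].
  - rewrite A; [apply completion_spec; assumption| |exists e; exact Ge].
    intros ->. apply Ni. exists e. exact Ge.
  - injection Ee; intros E1 ->. apply inj_pair2 in E1. rewrite E1. exact Ai.
Qed.

Lemma consistent_extend (G : wval -> Prop) (i : W) :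
  consistent G -> ~ assigned G i -> exists d, consistent (fun t => G t \/ t = existT _ i d).
Proof.
  intros HG Ni. pose proof HG as [Gfun _].
  destruct (Hfin (l := nil)) as [w0 _]; [intros _ []|].
  set (wG := completion G w0).
  destruct (Hsat HPW (extension_type_fin_sat (i := i) w0 HG)) as [d Hd].
  exists d. split; [exact (functional_extend (d := d) Gfun Ni)|].
  intros [|phi l] J Hl.
  - exists (env_upd wG i d). split; [|intros _ []].
    intros j e _. apply (agree_extend (w0 := w0) Gfun Ni); [|apply env_upd_eq].
    intros j' Hj' _. apply env_upd_neq. auto.
  - destruct (sat_support M (fconj phi l)) as [F HF].
    assert (Hpsi : extension_type G i (extension_formula G i F (fconj phi l))).
    { exists phi, l, F. split; [apply Hl; left; reflexivity|].
      split; [intros chi Hc; apply Hl; right; exact Hc|]. split; [exact HF|reflexivity]. }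
    apply Hd in Hpsi. unfold extension_formula in Hpsi.
    change (ext_env (pair_env p wG) d)
      with (ext_env (s := sum_sort ps ws (inr i)) (pair_env p wG) d) in Hpsi.
    rewrite sat_bind, env_upd_pair_inr, sat_fex_vars in Hpsi.
    destruct Hpsi as [e' [E' Se']].
    set (w := fun j => e' (inr j) : dom M (ws j)).
    assert (Ew : forall j, ~ In j (fresh G i F) -> w j = env_upd wG i d j).
    { intros j Hj. unfold w. rewrite E'; [reflexivity|].
      intros C. apply in_map_iff in C as [x [C1 C2]]. injection C1; intros ->. exact (Hj C2). }
    assert (Ee : e' = pair_env p w).
    { apply functional_extensionality_dep. intros [v|j]; [|reflexivity].
      rewrite E'; [reflexivity|]. intros C. apply in_map_iff in C as [x [C _]]. discriminate. }
    rewrite Ee, sat_fconj in Se'. destruct Se' as [S0 Sl].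
    exists w. split; [|intros chi [<-|Hc]; auto].
    intros j e _. apply (agree_extend (w0 := w0) Gfun Ni).
    + intros j' Hj' Aj'. rewrite Ew; [apply env_upd_neq; auto|].
      intros C. apply in_fresh in C. tauto.
    + rewrite Ew; [apply env_upd_eq|]. intros C. apply in_fresh in C. tauto.
Qed.

Lemma realize_type : exists w : tup M ws, forall phi, Sigma phi -> sat phi (pair_env p w).
Proof.
  destruct (@zorn_union wval consistent consistent_union) as [G [HG Gmax]].
  assert (Gtot : forall i, assigned G i).
  { intros i. apply NNPP. intros Ni.
    destruct (consistent_extend HG Ni) as [d Hd].
    apply Ni. exists d. apply (Gmax _ (fun t Ht => or_introl Ht) Hd). right. reflexivity. }
  destruct (Hfin (l := nil)) as [w0 _]; [intros _ []|].
  exists (completion G w0). intros phi Sphi.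
  destruct (sat_support M phi) as [F HF].
  destruct (proj2 HG (phi :: nil) (inr_vars F)) as [w [Aw Sw]]; [intros chi [<-|[]]; exact Sphi|].
  refine (proj1 (HF (pair_env p w) _ _) (Sw phi (or_introl eq_refl))).
  intros [v|j] Hj; [reflexivity|]. simpl. destruct (Gtot j) as [d Hd].
  rewrite (Aw j d (in_inr_vars Hj) Hd). symmetry. apply completion_spec; [exact (proj1 HG)|exact Hd].
Qed.

End Realize.

(** * The chain type [Phi_n] *)

Section Telescope.
Variable L : signature.
Variable M : structure L.
Variable K : Type.
Hypothesis Hhom : strongly_homogeneous K M.
Variables (I : Type) (srt : I -> sort L).
Hypothesis HI : lt_card I K.

Lemma conjugating_family (n : nat) (a : tup M srt) (sigma : autfun M) (c : nat -> tup M srt) :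
  0 < n -> is_aut sigma -> c 0 = a -> c n = apply_tup sigma a ->
  (forall k, 0 < k < n -> forall phi : formula srt, sat phi a <-> sat phi (c k)) ->
  exists P : nat -> autfun M, (forall k, is_aut (P k)) /\
    (forall k, k <= n -> apply_tup (P k) a = c k) /\ P 0 = aut_id /\ P n = sigma.
Proof.
  intros Hn Hsigma C0 Cn Hc.
  assert (HP : forall k, exists Pk : autfun M, is_aut Pk /\ (k <= n -> apply_tup Pk a = c k) /\
                 (k = 0 -> Pk = aut_id) /\ (k = n -> Pk = sigma)).
  { intros k. destruct (Nat.eq_dec k 0) as [->|Hk0]; [|destruct (Nat.eq_dec k n) as [->|Hkn]].
    - exists aut_id. split; [apply is_aut_id|]. split; [|split; [reflexivity|lia]].
      intros _. rewrite C0. reflexivity.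
    - exists sigma. split; [exact Hsigma|]. split; [|split; [lia|reflexivity]].
      intros _. symmetry. exact Cn.
    - destruct (lt_dec k n) as [Hkl|Hkl].
      + assert (Hk : 0 < k < n) by lia.
        destruct (Hhom HI (Hc k Hk)) as [Pk [HPk Ek]].
        exists Pk. split; [exact HPk|]. split; [|split; lia].
        intros _. apply functional_extensionality_dep. exact Ek.
      + exists aut_id. split; [apply is_aut_id|]. split; [|split]; lia. }
  destruct (choice _ HP) as [P HPs].
  exists P. split; [|split; [|split]]; intros; apply HPs; auto.
Qed.

Lemma telescope (n : nat) (a : tup M srt) (sigma : autfun M) (c : nat -> tup M srt) :
  0 < n -> is_aut sigma -> c 0 = a -> c n = apply_tup sigma a ->
  (forall k, 0 < k < n -> forall phi : formula srt, sat phi a <-> sat phi (c k)) ->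
  exists tau : nat -> autfun M,
    (forall k, k < n -> is_aut (tau k) /\ forall phi : formula (sum_sort srt srt),
       sat phi (pair_env (apply_tup (tau k) a) a) <-> sat phi (pair_env (c (S k)) (c k))) /\
    forall s x, sigma s x = comp_n n tau (s:=s) x.
Proof.
  intros Hn Hsigma C0 Cn Hc.
  destruct (conjugating_family Hn Hsigma C0 Cn Hc) as [P [HP [Pc [P0 Pn]]]].
  assert (HQ : forall k, exists Qk : autfun M, is_aut Qk /\
                 (forall s x, Qk s (P k s x) = x) /\ (forall s x, P k s (Qk s x) = x))
    by (intros k; apply is_aut_inverse, HP).
  destruct (choice _ HQ) as [Q HQs].
  exists (fun k => aut_comp (Q k) (P (S k))). split.
  - intros k Hk. split; [apply is_aut_comp; [apply (HQs k)|apply HP]|].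
    intros phi.
    replace (pair_env (apply_tup (aut_comp (Q k) (P (S k))) a) a)
      with (aut_env (Q k) (pair_env (c (S k)) (c k))); [apply sat_aut, (HQs k)|].
    rewrite aut_env_pair, <- (Pc (S k)), <- (Pc k) by lia.
    rewrite (apply_tup_inv (sigma := P k)) by apply (HQs k). reflexivity.
  - assert (Comp : forall k s x, comp_n k (fun k => aut_comp (Q k) (P (S k))) (s:=s) x = P k s x).
    { induction k as [|k IH]; intros s x.
      - rewrite P0. reflexivity.
      - simpl. rewrite IH. unfold aut_comp. apply (HQs k). }
    intros s x. rewrite Comp, Pn. reflexivity.
Qed.

End Telescope.

Section ChainType.
Variable L : signature.
Variable n : nat.
Variable I : Type.
Variable srt : I -> sort L.

Definition chain_var := ({k : nat | k < n} * I)%type.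
Definition chain_sort (w : chain_var) : sort L := srt (snd w).
Definition all_var := (phi_var I n + chain_var)%type.
Definition all_sort : all_var -> sort L := sum_sort (phi_sort srt (n:=n)) chain_sort.

(* The [k]-th link of the chain [y = c_0, c_1, ..., c_n = x]; the inner links are [chain_var]s. *)
Definition link_var (k : nat) (i : I) : all_var :=
  match k with
  | O => inl (inl (inr i))
  | S _ => match lt_dec k n with
           | left H => inr (exist _ k H, i)
           | right _ => inl (inl (inl i))
           end
  end.

Lemma link_sort k i : all_sort (link_var k i) = srt i.
Proof. destruct k; [reflexivity|]. simpl. destruct (lt_dec (S k) n); reflexivity. Qed.

Definition step_map (k : nat) (v : I + I) : all_var :=
  match v with inl i => link_var (S k) i | inr i => link_var k i end.
Definition step_sort (k : nat) : forall v, all_sort (step_map k v) = sum_sort srt srt v :=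
  fun v => match v with inl i => link_sort (S k) i | inr i => link_sort k i end.

Definition witness_map (kk : {k : nat | k < n}) (v : I + I) : all_var :=
  match v with inl i => inl (inr (kk, i)) | inr i => inl (inl (inr i)) end.
Definition witness_sort (kk : {k : nat | k < n}) :
  forall v, all_sort (witness_map kk v) = sum_sort srt srt v :=
  fun v => match v with inl i => eq_refl | inr i => eq_refl end.

(* [tp(c_(k+1), c_k) = tp(x_k, y)] for every [k < n]. *)
Definition chain_type (chi : formula all_sort) : Prop :=
  exists (kk : {k : nat | k < n}) (phi : formula (sum_sort srt srt)),
    chi = fiff (rename (step_sort (proj1_sig kk)) phi) (rename (witness_sort kk) phi).

(* Sends the chain variables to [y]; harmless once they are all quantified. *)
Definition collapse (v : all_var) : phi_var I n :=
  match v with inl u => u | inr w => inl (inr (snd w)) end.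
Definition collapse_sort : forall v, phi_sort srt (collapse v) = all_sort v :=
  fun v => match v with inl u => eq_refl | inr w => eq_refl end.

Variable M : structure L.

Definition Phi : ptype (phi_sort srt (n:=n)) :=
  fun psi => exists phi l F, chain_type phi /\ (forall chi, In chi l -> chain_type chi) /\
    supports M F (fconj phi l) /\
    psi = rename collapse_sort (fex_vars (map inr (inr_vars F)) (fconj phi l)).

Definition chain_at (E : forall v, dom M (all_sort v)) (k : nat) : tup M srt :=
  fun i => eq_rect _ (dom M) (E (link_var k i)) _ (link_sort k i).

Section Links.
Variables (c d : tup M srt) (e : {k : nat | k < n} -> tup M srt) (w : tup M chain_sort).
Let E := pair_env (phi_env c d e) w.

Lemma chain_at_0 : chain_at E 0 = d.
Proof.
  apply functional_extensionality_dep. intros i. unfold chain_at.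
  generalize (link_sort 0 i). simpl. intros q. rewrite (proof_irrelevance _ q eq_refl). reflexivity.
Qed.

Lemma chain_at_inner k (Hk : k < n) : 0 < k -> chain_at E k = fun i => w (exist _ k Hk, i).
Proof.
  intros Hk0. apply functional_extensionality_dep. intros i. unfold chain_at.
  generalize (link_sort k i). destruct k as [|k]; [lia|]. simpl.
  destruct (lt_dec (S k) n) as [H|H]; [|lia]. simpl. intros q.
  rewrite (proof_irrelevance _ q eq_refl), (proof_irrelevance _ H Hk). reflexivity.
Qed.

Lemma chain_at_end k : n <= k -> 0 < k -> chain_at E k = c.
Proof.
  intros Hnk Hk0. apply functional_extensionality_dep. intros i. unfold chain_at.
  generalize (link_sort k i). destruct k as [|k]; [lia|]. simpl.
  destruct (lt_dec (S k) n) as [H|H]; [lia|]. simpl. intros q.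
  rewrite (proof_irrelevance _ q eq_refl). reflexivity.
Qed.

Lemma sat_chain_type :
  (forall chi, chain_type chi -> sat chi E) <->
  forall (kk : {k : nat | k < n}) phi, sat phi (pair_env (chain_at E (S (proj1_sig kk)))
    (chain_at E (proj1_sig kk))) <-> sat phi (pair_env (e kk) d).
Proof.
  assert (Hstep : forall kk phi, sat (fiff (rename (step_sort (proj1_sig kk)) phi)
                                           (rename (witness_sort kk) phi)) E <->
    (sat phi (pair_env (chain_at E (S (proj1_sig kk))) (chain_at E (proj1_sig kk))) <->
     sat phi (pair_env (e kk) d))).
  { intros kk phi. rewrite sat_fiff, !sat_rename.
    replace (pull_env (step_sort (proj1_sig kk)) E)
      with (pair_env (chain_at E (S (proj1_sig kk))) (chain_at E (proj1_sig kk)))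
      by (apply functional_extensionality_dep; intros [i|i]; reflexivity).
    replace (pull_env (witness_sort kk) E) with (pair_env (e kk) d)
      by (apply functional_extensionality_dep; intros [i|i]; reflexivity).
    tauto. }
  split.
  - intros H kk phi. apply Hstep, H. exists kk, phi. reflexivity.
  - intros H chi [kk [phi ->]]. apply Hstep, H.
Qed.

End Links.

Lemma pull_env_collapse (q : forall u, dom M (phi_sort srt u)) :
  pull_env collapse_sort q = pair_env q (fun w => q (inl (inr (snd w)))).
Proof. apply functional_extensionality_dep. intros [u|w]; reflexivity. Qed.

Lemma Phi_fin_realizable (q : forall u, dom M (phi_sort srt u)) : sat_type Phi q ->
  forall l, (forall chi, In chi l -> chain_type chi) ->
  exists w : tup M chain_sort, forall chi, In chi l -> sat chi (pair_env q w).
Proof.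
  intros HPhi [|phi l] Hl; [exists (fun w => q (inl (inr (snd w)))); intros _ []|].
  destruct (sat_support M (fconj phi l)) as [F HF].
  assert (Hpsi : Phi (rename collapse_sort (fex_vars (map inr (inr_vars F)) (fconj phi l)))).
  { exists phi, l, F. split; [apply Hl; left; reflexivity|].
    split; [intros chi Hc; apply Hl; right; exact Hc|]. split; [exact HF|reflexivity]. }
  apply HPhi in Hpsi. rewrite sat_rename, pull_env_collapse, sat_fex_vars in Hpsi.
  destruct Hpsi as [e' [E' Se']].
  assert (Ee : e' = pair_env q (fun w => e' (inr w))).
  { apply functional_extensionality_dep. intros [u|w]; [|reflexivity].
    rewrite E'; [reflexivity|]. intros C. apply in_map_iff in C as [z [C _]]. discriminate. }
  rewrite Ee, sat_fconj in Se'. destruct Se' as [S0 Sl].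
  exists (fun w => e' (inr w)). intros chi [<-|Hc]; auto.
Qed.

Lemma sat_Phi (q : forall u, dom M (phi_sort srt u)) (w : tup M chain_sort) :
  (forall chi, chain_type chi -> sat chi (pair_env q w)) -> sat_type Phi q.
Proof.
  intros Hw psi [phi [l [F [S1 [S2 [HF ->]]]]]].
  rewrite sat_rename, pull_env_collapse, sat_fex_vars.
  set (w' := fun x => if excluded_middle_informative (In x (inr_vars F)) then w x
                      else q (inl (inr (snd x)))).
  exists (pair_env q w'). split.
  - intros [u|x] Hv; [reflexivity|]. simpl. unfold w'.
    destruct (excluded_middle_informative (In x (inr_vars F))) as [A|A]; [|reflexivity].
    exfalso. apply Hv, in_map, A.
  - refine (proj1 (HF (pair_env q w) (pair_env q w') _) _).
    + intros [u|x] Hv; [reflexivity|]. simpl. unfold w'.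
      destruct (excluded_middle_informative (In x (inr_vars F))) as [A|A]; [reflexivity|].
      exfalso. apply A, in_inr_vars, Hv.
    + apply sat_fconj. split; auto.
Qed.

End ChainType.

Lemma lt_card_all_var (K : Type) (n : nat) (I : Type) :
  0 < n -> lt_card nat K -> lt_card I K -> lt_card (all_var n I) K.
Proof.
  intros Hn HN HI. destruct n as [|m]; [lia|].
  set (Y := ({k : nat | k < S m} * I)%type).
  assert (HY : lt_card Y K) by (apply lt_card_ord_prod; assumption).
  apply (lt_card_of_le (B := ((Y + Y) + (Y + Y))%type)).
  2: apply lt_card_sum_diag, lt_card_sum_diag; assumption.
  set (o := exist (fun k => k < S m) 0 Hn).
  exists (fun v : all_var (S m) I => match v with
    | inl (inl (inl i)) => inl (inl (o, i))
    | inl (inl (inr i)) => inl (inr (o, i))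
    | inl (inr x) => inr (inl x)
    | inr x => inr (inr x) end).
  intros [[[i|i]|x]|x] [[[i'|i']|x']|x'] E; try discriminate; injection E; intros; subst; reflexivity.
Qed.

Definition inr_sort (L : signature) (I J : Type) (sI : I -> sort L) (sJ : J -> sort L) :
  forall j, sum_sort sI sJ (inr j) = sJ j := fun j => eq_refl.

Lemma sat_rename_inr (L : signature) (M : structure L) (I J : Type) (sI : I -> sort L)
  (sJ : J -> sort L) (phi : formula sJ) (c : tup M sI) (d : tup M sJ) :
  sat (rename (inr_sort sI sJ) phi) (pair_env c d) <-> sat phi d.
Proof. rewrite sat_rename. tauto. Qed.

Section Products.
Variable L : signature.
Variable K : Type.
Variable M : structure L.
Hypothesis HM : monster K M.
Variables (n : nat) (I : Type) (srt : I -> sort L).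
Hypothesis Hn : 0 < n.
Hypothesis HI : lt_card I K.
Variables (pis : nat -> ptype (sum_sort srt srt)) (a : tup M srt).

Definition A_Phi : aut_set M :=
  A_rel (fun c d => exists e : {k : nat | k < n} -> tup M srt,
                      (forall k, sat_type (pis (proj1_sig k)) (pair_env (e k) d)) /\
                      sat_type (Phi (n := n) (srt := srt) M) (phi_env c d e))
        a a.

Lemma prod_sub_A_Phi sigma : prod_n n (fun k => A_pi (pis k) a a) sigma -> A_Phi sigma.
Proof.
  intros [tau [Htau Hsig]].
  assert (Htau_aut : forall k, k < n -> is_aut (tau k)) by (intros k Hk; apply (Htau k Hk)).
  assert (Hsigma : is_aut sigma).
  { rewrite (autfun_ext Hsig). apply is_aut_comp_n, Htau_aut. }
  split; [exact Hsigma|].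
  exists (fun kk => apply_tup (tau (proj1_sig kk)) a). split.
  { intros [k Hk]. exact (proj2 (Htau k Hk)). }
  set (w := (fun x : chain_var n I => comp_n (proj1_sig (fst x)) tau (s := srt (snd x)) (a (snd x)))
            : tup M (chain_sort (n := n) srt)).
  apply (sat_Phi (w := w)), sat_chain_type.
  set (E := pair_env (phi_env (apply_tup sigma a) a
                               (fun kk : {k : nat | k < n} => apply_tup (tau (proj1_sig kk)) a)) w).
  assert (Ech : forall j, j <= n -> chain_at E j = apply_tup (comp_n j tau) a).
  { intros j Hj. unfold E. destruct (Nat.eq_dec j 0) as [->|Hj0]; [apply chain_at_0|].
    destruct (lt_dec j n) as [Hjn|Hjn].
    - rewrite (chain_at_inner _ _ _ _ Hjn) by lia. reflexivity.
    - replace j with n by lia. rewrite chain_at_end by lia.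
      apply functional_extensionality_dep. intros i. apply Hsig. }
  intros [k Hk] phi. simpl. rewrite !Ech by lia.
  replace (pair_env (apply_tup (comp_n (S k) tau) a) (apply_tup (comp_n k tau) a))
    with (aut_env (comp_n k tau) (pair_env (apply_tup (tau k) a) a))
    by (rewrite aut_env_pair; reflexivity).
  apply sat_aut, is_aut_comp_n. intros j Hj. apply Htau_aut. lia.
Qed.

Lemma A_Phi_sub_prod sigma : A_Phi sigma -> prod_n n (fun k => A_pi (pis k) a a) sigma.
Proof.
  intros [Hsigma [e [He HPhi]]].
  destruct HM as [Hcard [Hsat Hhom]].
  assert (HN : lt_card nat K).
  { apply (lt_card_of_le (B := (nat + (sort L + (fsym L + rsym L)))%type)); [|exact Hcard].
    exists inl. intros x y E. injection E. auto. }
  destruct (realize_type Hsat (lt_card_all_var Hn HN HI) (Phi_fin_realizable HPhi)) as [w Hw].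
  set (ch := chain_at (pair_env (phi_env (apply_tup sigma a) a e) w)).
  assert (Hstep : forall (kk : {k : nat | k < n}) phi,
            sat phi (pair_env (ch (S (proj1_sig kk))) (ch (proj1_sig kk))) <->
            sat phi (pair_env (e kk) a))
    by exact (proj1 (sat_chain_type _ _ _ _) Hw).
  assert (Htype : forall k, 0 < k < n -> forall phi : formula srt, sat phi a <-> sat phi (ch k)).
  { intros k Hk phi. pose proof (Hstep (exist _ k (proj2 Hk)) (rename (inr_sort srt srt) phi)) as H.
    simpl in H. rewrite !sat_rename_inr in H. symmetry. exact H. }
  destruct (telescope Hhom HI (c := ch) Hn Hsigma (chain_at_0 _ _ _ _) (chain_at_end _ _ _ _ (le_n n) Hn)
              Htype) as [tau [Htau Hsig]].
  exists tau. split; [|exact Hsig].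
  intros k Hk. split; [apply (Htau k Hk)|].
  intros phi Hphi. apply (proj2 (Htau k Hk)), (Hstep (exist _ k Hk)), (He (exist _ k Hk)), Hphi.
Qed.

End Products.

Theorem lemma5p7 (L : signature) (K : Type) (M : structure L)
  (HM : monster K M) :
  (* (i) *)
  (forall (I J : Type) (sI : I -> sort L) (sJ : J -> sort L)
     (pi : ptype (sum_sort sI sJ)) (a : tup M sI) (b : tup M sJ),
     lt_card I K -> lt_card J K ->
     set_eq (inv_set (A_pi pi a b)) (A_pi (swap_ptype pi) b a)) /\
  (* (ii) *)
  (forall n : nat, 2 <= n ->
   forall (I : Type) (srt : I -> sort L), lt_card I K ->
   exists Phi : ptype (phi_sort srt (n:=n)),
   forall (pis : nat -> ptype (sum_sort srt srt)) (a : tup M srt),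
     set_eq (prod_n n (fun k => A_pi (pis k) a a))
       (A_rel (fun c d =>
                 exists e : {k : nat | k < n} -> tup M srt,
                   (forall k, sat_type (pis (proj1_sig k)) (pair_env (e k) d)) /\
                   sat_type Phi (phi_env c d e))
              a a)).
Proof.
  split.
  - intros I J sI sJ pi a b _ _. apply inv_set_A_pi.
  - intros n Hn I srt HI. exists (Phi (n := n) (srt := srt) M). intros pis a sigma.
    assert (Hn0 : 0 < n) by lia.
    split; [apply (prod_sub_A_Phi Hn0)|apply (A_Phi_sub_prod HM Hn0 HI)].
Qed.
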